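(* Let $(X,f)$, $(Y,g)$ be dynamical systems, $t\in\mathbb N$, and $\pi\colon(X,f)\to(Y,g)$ a factor map with $\#\pi^{-1}(y)\le t$ for every $y\in Y$. Let $S\subset X$ be an uncountable syndetically scrambled set for $f$ such that for every collection $x_1,\dots,x_{t+1}$ of $t+1$ distinct points of $S$ there are $\varepsilon>0$ and an infinite set $M\subset\mathbb N$ with $d(f^n(x_i),f^n(x_j))\ge\varepsilon$ for all $n\in M$ and all $1\le i<j\le t+1$. Then $\pi(S)$ contains an uncountable syndetically scrambled set for $g$. If $S$ is a Cantor set, then $\pi(S)$ contains a Cantor syndetically scrambled set for $g$.
   Context: Dynamical system: compact metric space with continuous self-map. Factor map: continuous surjection $\pi$ with $\pi\circ f=g\circ\pi$. Syndetic: subset of $\mathbb N$ meeting every set with arbitrarily long runs of consecutive integers. $\mathrm{Asy}(f)=\{(x,y):d(f^nx,f^ny)\to0\}$, $\mathrm{SProx}(f)=\{(x,y):\{n:d(f^nx,f^ny)<\eta\}$ syndetic for all $\eta>0\}$ (likewise for $g$). A syndetically scrambled set has at least two points and all pairs of distinct points in $\mathrm{SProx}\setminus\mathrm{Asy}$. Cantor set: nonempty compact perfect totally disconnected. *)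

From Stdlib Require Import Reals List.
Import ListNotations.
Open Scope R_scope.

Section Metric.
Context {X : Type} (d : X -> X -> R).

Definition is_metric : Prop :=
  (forall x y, 0 <= d x y) /\
  (forall x y, d x y = 0 <-> x = y) /\
  (forall x y, d x y = d y x) /\
  (forall x y z, d x z <= d x y + d y z).

Definition open_set (U : X -> Prop) : Prop :=
  forall x, U x -> exists r, 0 < r /\ forall y, d x y < r -> U y.

Definition compact_subset (K : X -> Prop) : Prop :=
  forall (I : Type) (U : I -> X -> Prop),
    (forall i, open_set (U i)) ->
    (forall x, K x -> exists i, U i x) ->
    exists l : list I, forall x, K x -> exists i, In i l /\ U i x.

Definition compact_space : Prop := compact_subset (fun _ => True).

Definition connected_subset (C : X -> Prop) : Prop :=
  ~ exists U V : X -> Prop,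
      open_set U /\ open_set V /\
      (forall x, C x -> U x \/ V x) /\
      (exists x, C x /\ U x) /\ (exists x, C x /\ V x) /\
      (forall x, C x -> U x -> V x -> False).

Definition perfect_subset (S : X -> Prop) : Prop :=
  forall x, S x -> forall eps, 0 < eps -> exists y, S y /\ y <> x /\ d x y < eps.

Definition totally_disconnected_subset (S : X -> Prop) : Prop :=
  forall C : X -> Prop, (forall x, C x -> S x) -> connected_subset C ->
    forall x y, C x -> C y -> x = y.

Definition cantor_subset (S : X -> Prop) : Prop :=
  (exists x, S x) /\ compact_subset S /\ perfect_subset S /\
  totally_disconnected_subset S.

End Metric.

Definition continuous_map {X Y : Type} (dX : X -> X -> R) (dY : Y -> Y -> R)
  (h : X -> Y) : Prop :=
  forall x eps, 0 < eps -> exists delta, 0 < delta /\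
    forall x', dX x x' < delta -> dY (h x) (h x') < eps.

Definition factor_map {X Y : Type} (dX : X -> X -> R) (dY : Y -> Y -> R)
  (f : X -> X) (g : Y -> Y) (p : X -> Y) : Prop :=
  continuous_map dX dY p /\ (forall y, exists x, p x = y) /\
  (forall x, p (f x) = g (p x)).

Definition countable_subset {X : Type} (S : X -> Prop) : Prop :=
  exists h : X -> nat, forall x y, S x -> S y -> h x = h y -> x = y.

Definition uncountable_subset {X : Type} (S : X -> Prop) : Prop :=
  ~ countable_subset S.

Definition thick (B : nat -> Prop) : Prop :=
  forall L : nat, exists m : nat, forall k, (k < L)%nat -> B (m + k)%nat.

Definition syndetic (A : nat -> Prop) : Prop :=
  forall B, thick B -> exists n, A n /\ B n.

Definition infinite_nat_set (M : nat -> Prop) : Prop :=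
  forall N : nat, exists n, (N <= n)%nat /\ M n.

Definition Asy {X : Type} (d : X -> X -> R) (f : X -> X) (x y : X) : Prop :=
  forall eps, 0 < eps -> exists N : nat, forall n, (N <= n)%nat ->
    d (Nat.iter n f x) (Nat.iter n f y) < eps.

Definition SProx {X : Type} (d : X -> X -> R) (f : X -> X) (x y : X) : Prop :=
  forall eta, 0 < eta ->
    syndetic (fun n => d (Nat.iter n f x) (Nat.iter n f y) < eta).

Definition synd_scrambled {X : Type} (d : X -> X -> R) (f : X -> X)
  (S : X -> Prop) : Prop :=
  (exists x y, S x /\ S y /\ x <> y) /\
  (forall x y, S x -> S y -> x <> y -> SProx d f x y /\ ~ Asy d f x y).

Definition fibers_bounded {X Y : Type} (p : X -> Y) (t : nat) : Prop :=
  forall (y : Y) (l : list X), NoDup l -> (forall x, In x l -> p x = y) ->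
    (length l <= t)%nat.

Definition image {X Y : Type} (p : X -> Y) (S : X -> Prop) : Y -> Prop :=
  fun y => exists x, S x /\ p x = y.

From Pilot Require Import Defs.
From Stdlib Require Import Reals List Lra Lia Classical ClassicalEpsilon
  FunctionalExtensionality PropExtensionality Cantor.
Import ListNotations.
Open Scope R_scope.

(* Write x ~ y for "g-asymptotic images": Asy g (p x) (p y).  The separation
   hypothesis on (t+1)-tuples of S implies, by a compactness argument along
   a common convergent subsequence of the orbits, that no t+1 points of S are
   pairwise ~-related (lemma [separated_tuples_bound]).  Syndetic proximality
   passes to the factor by uniform continuity of p ([sprox_factor]).

   - Uncountable case: choose one representative of each Asy-class of p(S).
     Each class meets p(S) in the image of at most t points of S, so the set of
     representatives is still uncountable ([uncountable_image_bounded_fibres])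
     and it is syndetically scrambled since distinct representatives are never
     asymptotic ([uncountable_scrambled_factor]).
   - Cantor case: p(S) is compact and perfect ([image_compact],
     [image_perfect]), SProx on it, and its Asy-classes have at most t points.
     A Mycielski-type construction inside any such set K ([cantor_in_compact])
     builds a dyadic tree of shrinking closed balls whose distinct branches are
     eventually separated infinitely often; the intersection of the levels is a
     Cantor set of pairwise non-asymptotic points. *)

Lemma dependent_choice {A : Type} (Inv : nat -> A -> Prop) (Rel : nat -> A -> A -> Prop) (a0 : A) :
  Inv 0%nat a0 -> (forall s a, Inv s a -> exists b, Inv (S s) b /\ Rel s a b) ->
  exists F : nat -> A, F 0%nat = a0 /\ forall s, Inv s (F s) /\ Rel s (F s) (F (S s)).
Proof.
  intros H0 Hs.
  assert (step : forall s (a : {a | Inv s a}), {b | Inv (S s) b /\ Rel s (proj1_sig a) b}).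
  { intros s [a Ha]. apply constructive_indefinite_description. apply Hs; auto. }
  pose (G := fix G (s : nat) : {a | Inv s a} :=
     match s with 0 => exist _ a0 H0
     | S s' => exist _ (proj1_sig (step s' (G s'))) (proj1 (proj2_sig (step s' (G s')))) end).
  exists (fun s => proj1_sig (G s)). split; [reflexivity|].
  intro s. split.
  - apply (proj2_sig (G s)).
  - exact (proj2 (proj2_sig (step s (G s)))).
Qed.

Lemma list_common_radius {A} (l : list A) (P : A -> R -> Prop) :
  (forall a e e', P a e -> 0 < e' <= e -> P a e') ->
  (forall a, In a l -> exists e, 0 < e /\ P a e) ->
  exists e, 0 < e /\ forall a, In a l -> P a e.
Proof.
  intros Hm. induction l as [|a l IH]; intros H.
  - exists 1. split; [lra| intros a []].
  - destruct (H a (or_introl eq_refl)) as [e1 [He1 P1]].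
    destruct IH as [e2 [He2 P2]]. { intros b Hb; apply H; right; auto. }
    assert (Hmin : 0 < Rmin e1 e2) by (apply Rmin_glb_lt; auto).
    exists (Rmin e1 e2). split; auto.
    intros b [<-|Hb].
    + apply (Hm _ e1); auto. split; [auto|apply Rmin_l].
    + apply (Hm _ e2); auto. split; [auto|apply Rmin_r].
Qed.

Lemma nat_common_radius (m : nat) (P : nat -> R -> Prop) :
  (forall a e e', P a e -> 0 < e' <= e -> P a e') ->
  (forall a, (a < m)%nat -> exists e, 0 < e /\ P a e) ->
  exists e, 0 < e /\ forall a, (a < m)%nat -> P a e.
Proof.
  intros Hm H. destruct (list_common_radius (seq 0 m) P Hm) as [e [He Pe]].
  { intros a Ha. apply in_seq in Ha. apply H. lia. }
  exists e. split; auto. intros a Ha. apply Pe. apply in_seq. lia.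
Qed.

Lemma list_nat_bound {A} (N : A -> nat) (l : list A) : exists M, forall a, In a l -> (N a <= M)%nat.
Proof.
  induction l as [|a l [M HM]].
  - exists 0%nat; intros a [].
  - exists (Nat.max (N a) M). intros b [<-|Hb]; [lia|]. specialize (HM b Hb). lia.
Qed.

(* The scale 1/(k+1) used for all quantitative statements. *)
Lemma inv_succ_lt (eps : R) : 0 < eps -> exists k : nat, / INR (S k) < eps.
Proof.
  intros He. destruct (archimed_cor1 eps He) as [N [H1 H2]].
  destruct N as [|k]; [lia|]. exists k; auto.
Qed.

Lemma inv_succ_pos (k : nat) : 0 < / INR (S k).
Proof. apply Rinv_0_lt_compat. apply lt_0_INR. lia. Qed.

Lemma inv_succ_le (k k' : nat) : (k <= k')%nat -> / INR (S k') <= / INR (S k).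
Proof. intros H. apply Rinv_le_contravar; [apply lt_0_INR; lia | apply le_INR; lia]. Qed.

Lemma NoDup_map_inj_on {A B} (h : A -> B) (l : list A) :
  NoDup l -> (forall x y, In x l -> In y l -> h x = h y -> x = y) -> NoDup (map h l).
Proof.
  induction l as [|a l IH]; intros Hn Hi; simpl; [constructor|].
  inversion Hn; subst. constructor.
  - intro Hin. apply in_map_iff in Hin. destruct Hin as [x [Hx1 Hx2]].
    assert (x = a) by (apply Hi; simpl; auto). subst; contradiction.
  - apply IH; auto. intros x y Hx Hy; apply Hi; simpl; auto.
Qed.

Lemma NoDup_sublist_of_length {A} (l : list A) (n : nat) : NoDup l -> (n <= length l)%nat ->
  exists l', NoDup l' /\ length l' = n /\ forall a, In a l' -> In a l.
Proof.
  revert n. induction l as [|a l IH]; intros n Hn Hle.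
  - simpl in Hle. exists []. repeat split; [constructor|simpl; lia|intros a []].
  - destruct n as [|n].
    + exists []. repeat split; [constructor|intros b []].
    + inversion Hn; subst. simpl in Hle. destruct (IH n H2 ltac:(lia)) as [l' [K1 [K3 K4]]].
      exists (a :: l'). repeat split; [constructor; auto|simpl; lia|].
      intros b [<-|Hb]; simpl; auto.
Qed.

Lemma bounded_predicate_enumerable {A} (P : A -> Prop) (t : nat) :
  (forall l, NoDup l -> (forall a, In a l -> P a) -> (length l <= t)%nat) ->
  exists l, NoDup l /\ forall a, In a l <-> P a.
Proof.
  intros Hb.
  assert (H : forall n l0, NoDup l0 -> (forall a, In a l0 -> P a) -> (t - length l0 <= n)%nat ->
     exists l, NoDup l /\ forall a, In a l <-> P a).
  { induction n as [|n IH]; intros l0 Hn HP Hlen.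
    - exists l0. split; auto. intro a. split; auto. intro Ha. apply NNPP; intro Hn2.
      assert (length (a :: l0) <= t)%nat.
      { apply Hb; [constructor; auto|]. intros b [<-|Hb2]; auto. }
      simpl in H; lia.
    - destruct (classic (forall a, P a -> In a l0)) as [Hc|Hc].
      + exists l0. split; auto. intro a; split; auto.
      + apply not_all_ex_not in Hc. destruct Hc as [a Ha].
        apply imply_to_and in Ha. destruct Ha as [Ha1 Ha2].
        assert (length (a :: l0) <= t)%nat.
        { apply Hb; [constructor; auto|]. intros b [<-|Hb2]; auto. }
        apply (IH (a :: l0)); [constructor; auto| |simpl in *; lia].
        intros b [<-|Hb2]; auto. }
  apply (H t []); [constructor|intros a []|lia].
Qed.

Definition strictly_increasing (phi : nat -> nat) := forall k, (phi k < phi (S k))%nat.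

Lemma strictly_increasing_lt phi : strictly_increasing phi -> forall a b, (a < b)%nat -> (phi a < phi b)%nat.
Proof.
  intros H a b Hab. induction b; [lia|].
  destruct (Nat.eq_dec a b) as [->|]; [apply H|]. specialize (IHb ltac:(lia)). specialize (H b). lia.
Qed.

Lemma strictly_increasing_ge phi : strictly_increasing phi -> forall k, (k <= phi k)%nat.
Proof. intros H k. induction k; [lia|]. specialize (H k). lia. Qed.

Lemma strictly_increasing_comp phi th :
  strictly_increasing phi -> strictly_increasing th -> strictly_increasing (fun k => phi (th k)).
Proof. intros H1 H2 k. apply strictly_increasing_lt; auto. Qed.

Lemma infinite_enumeration (M : nat -> Prop) :
  infinite_nat_set M -> exists phi, strictly_increasing phi /\ forall k, M (phi k).
Proof.
  intros HM. destruct (HM 0%nat) as [a0 [_ Ha0]].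
  destruct (dependent_choice (fun k a => M a) (fun k a b => (a < b)%nat) a0) as [F [_ HF]]; auto.
  { intros k a _. destruct (HM (S a)) as [b [Hb1 Hb2]]. exists b. split; auto. }
  exists F. split; intro k; apply HF.
Qed.

Section MetricFacts.
Context {X : Type} (d : X -> X -> R) (Hd : is_metric d).

Lemma dist_nonneg x y : 0 <= d x y.
Proof. apply Hd. Qed.
Lemma dist_self x : d x x = 0.
Proof. apply Hd; reflexivity. Qed.
Lemma dist_zero x y : d x y = 0 -> x = y.
Proof. apply Hd. Qed.
Lemma dist_sym x y : d x y = d y x.
Proof. apply Hd. Qed.
Lemma dist_tri x y z : d x z <= d x y + d y z.
Proof. apply Hd. Qed.

Lemma dist_pos x y : x <> y -> 0 < d x y.
Proof.
  intros Hxy. destruct (Rle_lt_or_eq_dec 0 (d x y) (dist_nonneg x y)); auto.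
  exfalso; apply Hxy; apply dist_zero; auto.
Qed.

Lemma eq_of_dist_small x y : (forall e, 0 < e -> d x y < e) -> x = y.
Proof.
  intros H. apply dist_zero. destruct (Rle_lt_or_eq_dec 0 (d x y) (dist_nonneg x y)); auto.
  specialize (H _ r). lra.
Qed.

Lemma open_ball (c : X) (r : R) : Defs.open_set d (fun z => d c z < r).
Proof.
  intros x Hx. exists (r - d c x). split; [lra|]. intros y Hy.
  pose proof (dist_tri c x y). lra.
Qed.

Lemma open_ball_exterior (c : X) (r : R) : Defs.open_set d (fun z => r < d c z).
Proof.
  intros x Hx. exists (d c x - r). split; [lra|]. intros y Hy.
  pose proof (dist_tri c y x). rewrite (dist_sym y x) in H. lra.
Qed.

Definition converges (s : nat -> X) (z : X) :=
  forall e, 0 < e -> exists N, forall k, (N <= k)%nat -> d (s k) z < e.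

Lemma converges_subseq s z th :
  converges s z -> strictly_increasing th -> converges (fun k => s (th k)) z.
Proof.
  intros H Ht e He. destruct (H e He) as [N HN]. exists N. intros k Hk. apply HN.
  pose proof (strictly_increasing_ge th Ht k). lia.
Qed.

Lemma limits_apart (a b : nat -> X) z z' eps :
  0 < eps -> (forall k, eps <= d (a k) (b k)) -> converges a z -> converges b z' -> z <> z'.
Proof.
  intros He Hab Ha Hb <-.
  destruct (Ha (eps/2)) as [N1 HN1]; [lra|]. destruct (Hb (eps/2)) as [N2 HN2]; [lra|].
  specialize (HN1 (N1 + N2)%nat ltac:(lia)). specialize (HN2 (N1 + N2)%nat ltac:(lia)).
  specialize (Hab (N1 + N2)%nat).
  pose proof (dist_tri (a (N1 + N2)%nat) z (b (N1 + N2)%nat)). rewrite (dist_sym z) in H. lra.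
Qed.

Hypothesis Hc : compact_space d.

Lemma cluster_point (s : nat -> X) :
  exists z, forall e, 0 < e -> forall N, exists k, (N <= k)%nat /\ d (s k) z < e.
Proof.
  apply NNPP. intro Hn.
  assert (H1 : forall z, exists eN : R * nat,
     0 < fst eN /\ forall k, (snd eN <= k)%nat -> fst eN <= d (s k) z).
  { intro z. apply NNPP. intro H2. apply Hn. exists z. intros e He N. apply NNPP. intro H3.
    apply H2. exists (e, N). simpl. split; auto. intros k Hk.
    apply Rnot_lt_le. intro H4. apply H3. exists k; auto. }
  destruct (choice _ H1) as [eN HeN].
  destruct (Hc X (fun z w => d z w < fst (eN z))) as [l Hl].
  { intro z. apply open_ball. }
  { intros x _. exists x. rewrite dist_self. apply HeN. }
  destruct (list_nat_bound (fun z => snd (eN z)) l) as [M HM].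
  destruct (Hl (s M) I) as [z [Hz1 Hz2]]. destruct (HeN z) as [_ H].
  specialize (H M (HM z Hz1)). rewrite dist_sym in H. lra.
Qed.

Lemma bolzano_weierstrass (s : nat -> X) :
  exists th z, strictly_increasing th /\ converges (fun k => s (th k)) z.
Proof.
  destruct (cluster_point s) as [z Hz].
  destruct (Hz 1 ltac:(lra) 0%nat) as [a0 [_ Ha0]].
  destruct (dependent_choice (fun k a => d (s a) z < / INR (S k)) (fun k a b => (a < b)%nat) a0)
    as [F [_ HF]].
  { simpl. rewrite Rinv_1. auto. }
  { intros k a _. destruct (Hz (/ INR (S (S k))) (inv_succ_pos _) (S a)) as [b [Hb1 Hb2]].
    exists b. split; auto. }
  exists F, z. split; [intro k; apply HF|].
  intros e He. destruct (inv_succ_lt e He) as [K HK]. exists K. intros k Hk.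
  pose proof (inv_succ_le K k Hk). pose proof (proj1 (HF k)). cbv beta in H0. lra.
Qed.

Lemma common_convergent_subsequence (f : X -> X) (M : nat -> Prop) (l : list X) phi :
  strictly_increasing phi -> (forall k, M (phi k)) ->
  exists psi, strictly_increasing psi /\ (forall k, M (psi k)) /\
    forall x, In x l -> exists z, converges (fun k => Nat.iter (psi k) f x) z.
Proof.
  revert phi. induction l as [|a l IH]; intros phi Hp HM.
  - exists phi. repeat split; auto. intros x [].
  - destruct (IH phi Hp HM) as [psi [Hs [HMs Hl]]].
    destruct (bolzano_weierstrass (fun k => Nat.iter (psi k) f a)) as [th [z [Ht Hz]]].
    exists (fun k => psi (th k)). split; [apply strictly_increasing_comp; auto|].
    split; [intro; apply HMs|].
    intros x [<-|Hx]; [exists z; auto|].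
    destruct (Hl x Hx) as [z' Hz']. exists z'.
    apply (converges_subseq (fun k => Nat.iter (psi k) f x)); auto.
Qed.

End MetricFacts.

Lemma uniformly_continuous {X Y} (dX : X -> X -> R) (dY : Y -> Y -> R)
  (HdX : is_metric dX) (HdY : is_metric dY) (Hc : compact_space dX) (p : X -> Y) :
  continuous_map dX dY p ->
  forall e, 0 < e -> exists del, 0 < del /\ forall x x', dX x x' < del -> dY (p x) (p x') < e.
Proof.
  intros Hp e He.
  assert (H1 : forall x, exists del, 0 < del /\ forall x', dX x x' < del -> dY (p x) (p x') < e/2).
  { intro x. apply Hp. lra. }
  destruct (choice _ H1) as [dl Hdl].
  destruct (Hc X (fun x z => dX x z < dl x / 2)) as [l Hl].
  { intro x. apply open_ball; auto. }
  { intros x _. exists x. rewrite (dist_self dX HdX). pose proof (proj1 (Hdl x)). lra. }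
  destruct (list_common_radius l (fun a r => r <= dl a / 2)) as [del [Hdel Hdel2]].
  { intros a r r' H H'. lra. }
  { intros a _. exists (dl a / 2). pose proof (proj1 (Hdl a)). split; lra. }
  exists del. split; auto. intros x x' Hxx.
  destruct (Hl x I) as [a [Ha1 Ha2]]. specialize (Hdel2 a Ha1). destruct (Hdl a) as [Hpos Ha].
  pose proof (dist_tri dX HdX a x x').
  pose proof (Ha x ltac:(lra)). pose proof (Ha x' ltac:(lra)).
  pose proof (dist_tri dY HdY (p x) (p a) (p x')). rewrite (dist_sym dY HdY (p x) (p a)) in H3. lra.
Qed.

Lemma image_compact {X Y} (dX : X -> X -> R) (dY : Y -> Y -> R) (p : X -> Y) (S : X -> Prop) :
  continuous_map dX dY p -> compact_subset dX S -> compact_subset dY (image p S).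
Proof.
  intros Hp Hc I U HU Hcov.
  destruct (Hc I (fun i x => U i (p x))) as [l Hl].
  { intros i x Hx. destruct (HU i (p x) Hx) as [r [Hr Hr2]].
    destruct (Hp x r Hr) as [del [Hdel Hd]]. exists del. split; auto. }
  { intros x Hx. apply Hcov. exists x; auto. }
  exists l. intros y [x [Hx <-]]. apply Hl; auto.
Qed.

Lemma iter_commute {X Y} (f : X -> X) (g : Y -> Y) (p : X -> Y) :
  (forall x, p (f x) = g (p x)) -> forall n x, p (Nat.iter n f x) = Nat.iter n g (p x).
Proof. intros H n x. induction n; simpl; auto. rewrite H, IHn; auto. Qed.

Lemma iter_continuous {X} (d : X -> X -> R) (g : X -> X) :
  continuous_map d d g -> forall n, continuous_map d d (Nat.iter n g).
Proof.
  intros Hg n. induction n; intros x e He.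
  - exists e. split; auto.
  - destruct (Hg (Nat.iter n g x) e He) as [d1 [Hd1 H1]].
    destruct (IHn x d1 Hd1) as [d2 [Hd2 H2]].
    exists d2. split; auto. intros x' Hx'. simpl. apply H1. apply H2. auto.
Qed.

Section Asymptotic.
Context {X : Type} (d : X -> X -> R) (Hd : is_metric d) (f : X -> X).

Lemma Asy_refl x : Asy d f x x.
Proof. intros e He. exists 0%nat. intros n _. rewrite dist_self; auto. Qed.

Lemma Asy_sym x y : Asy d f x y -> Asy d f y x.
Proof. intros H e He. destruct (H e He) as [N HN]. exists N. intros n Hn. rewrite dist_sym; auto. Qed.

Lemma Asy_trans x y z : Asy d f x y -> Asy d f y z -> Asy d f x z.
Proof.
  intros H1 H2 e He. destruct (H1 (e/2)) as [N1 HN1]; [lra|]. destruct (H2 (e/2)) as [N2 HN2]; [lra|].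
  exists (N1 + N2)%nat. intros n Hn.
  pose proof (dist_tri d Hd (Nat.iter n f x) (Nat.iter n f y) (Nat.iter n f z)).
  specialize (HN1 n ltac:(lia)). specialize (HN2 n ltac:(lia)). lra.
Qed.

Definition far_often (k : nat) (u v : X) :=
  forall N, exists n, (N <= n)%nat /\ / INR (S k) < d (Nat.iter n f u) (Nat.iter n f v).

Lemma not_far_often_Asy u v : (forall k, ~ far_often k u v) -> Asy d f u v.
Proof.
  intros H e He. destruct (inv_succ_lt e He) as [k Hk]. specialize (H k). unfold far_often in H.
  apply not_all_ex_not in H. destruct H as [N HN]. exists N. intros n Hn.
  apply Rle_lt_trans with (/ INR (S k)); auto. apply Rnot_lt_le. intro H. apply HN. exists n; auto.
Qed.

End Asymptotic.

Lemma syndetic_mono (A B : nat -> Prop) : syndetic A -> (forall n, A n -> B n) -> syndetic B.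
Proof. intros H Hi C HC. destruct (H C HC) as [n [H1 H2]]. exists n; auto. Qed.

Lemma sprox_factor {X Y} (dX : X -> X -> R) (dY : Y -> Y -> R) (HdX : is_metric dX) (HdY : is_metric dY)
  (Hc : compact_space dX) (f : X -> X) (g : Y -> Y) (p : X -> Y) :
  continuous_map dX dY p -> (forall x, p (f x) = g (p x)) ->
  forall x y, SProx dX f x y -> SProx dY g (p x) (p y).
Proof.
  intros Hp Hcomm x y H eta Heta.
  destruct (uniformly_continuous dX dY HdX HdY Hc p Hp eta Heta) as [del [Hdel Hu]].
  apply (syndetic_mono _ _ (H del Hdel)). intros n Hn.
  rewrite <- !(iter_commute f g p Hcomm). apply Hu; auto.
Qed.

(** * Tuples separated infinitely often have non-asymptotic images *)

Definition asy_bounded_on {X Y} (p : X -> Y) (dY : Y -> Y -> R) (g : Y -> Y) (S : X -> Prop) (t : nat) :=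
  forall l, NoDup l -> (forall x, In x l -> S x) ->
    (forall x y, In x l -> In y l -> Asy dY g (p x) (p y)) -> (length l <= t)%nat.

Section SeparatedTuples.
Context {X Y : Type} (dX : X -> X -> R) (dY : Y -> Y -> R) (HdX : is_metric dX) (HdY : is_metric dY)
  (f : X -> X) (g : Y -> Y) (p : X -> Y)
  (Hpc : continuous_map dX dY p) (Hcomm : forall x, p (f x) = g (p x)).

Lemma asy_images_limits x y z z' psi :
  strictly_increasing psi ->
  converges dX (fun k => Nat.iter (psi k) f x) z -> converges dX (fun k => Nat.iter (psi k) f y) z' ->
  Asy dY g (p x) (p y) -> p z = p z'.
Proof.
  intros Hpsi Hz Hz' Hasy. apply (eq_of_dist_small dY HdY). intros e He.
  destruct (Hpc z (e/3)) as [d1 [Hd1 H1]]; [lra|].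
  destruct (Hpc z' (e/3)) as [d2 [Hd2 H2]]; [lra|].
  destruct (Hz d1 Hd1) as [N1 HN1]. destruct (Hz' d2 Hd2) as [N2 HN2].
  destruct (Hasy (e/3)) as [N3 HN3]; [lra|].
  set (k := (N1 + N2 + N3)%nat). pose proof (strictly_increasing_ge psi Hpsi k) as Hk.
  specialize (HN1 k ltac:(unfold k; lia)). specialize (HN2 k ltac:(unfold k; lia)).
  specialize (HN3 (psi k) ltac:(unfold k in *; lia)).
  rewrite (dist_sym dX HdX) in HN1, HN2.
  specialize (H1 _ HN1). specialize (H2 _ HN2).
  rewrite (iter_commute f g p Hcomm) in H1, H2.
  pose proof (dist_tri dY HdY (p z) (Nat.iter (psi k) g (p x)) (p z')).
  pose proof (dist_tri dY HdY (Nat.iter (psi k) g (p x)) (Nat.iter (psi k) g (p y)) (p z')).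
  rewrite (dist_sym dY HdY (p z')) in H2. lra.
Qed.

Hypothesis HcX : compact_space dX.
Variable t : nat.
Hypothesis Hfib : fibers_bounded p t.

(* t+1 distinct points whose orbits are pairwise eps-apart along an infinite
   set of times cannot have pairwise asymptotic images: limit points along a
   common subsequence would give t+1 distinct points in one fibre of p. *)
Lemma separated_tuple_not_asy (l : list X) eps (M : nat -> Prop) :
  NoDup l -> length l = S t -> 0 < eps -> infinite_nat_set M ->
  (forall n, M n -> forall x y, In x l -> In y l -> x <> y ->
     eps <= dX (Nat.iter n f x) (Nat.iter n f y)) ->
  ~ (forall x y, In x l -> In y l -> Asy dY g (p x) (p y)).
Proof.
  intros Hn Hlen Heps HM Hsep Hasy.
  destruct (infinite_enumeration M HM) as [phi [Hphi HMphi]].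
  destruct (common_convergent_subsequence dX HdX HcX f M l phi Hphi HMphi) as [psi [Hpsi [HMpsi Hconv]]].
  assert (Hz : forall x, exists z, In x l -> converges dX (fun k => Nat.iter (psi k) f x) z).
  { intro x. destruct (classic (In x l)) as [H|H].
    - destruct (Hconv x H) as [z Hz]; exists z; auto.
    - exists x; intros; contradiction. }
  destruct (choice _ Hz) as [lim Hlim].
  destruct l as [|x0 l0]; [discriminate|].
  assert (Hinj : NoDup (map lim (x0 :: l0))).
  { apply NoDup_map_inj_on; auto. intros x y Hx Hy Hxy. apply NNPP; intro Hne.
    apply (limits_apart dX HdX (fun k => Nat.iter (psi k) f x) (fun k => Nat.iter (psi k) f y)
      (lim x) (lim y) eps Heps); auto. }
  pose proof (Hfib (p (lim x0)) _ Hinj) as Hb.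
  rewrite length_map, Hlen in Hb.
  enough (S t <= t)%nat by lia. apply Hb.
  intros w Hw. apply in_map_iff in Hw. destruct Hw as [x [<- Hx]].
  assert (Hx0 : In x0 (x0 :: l0)) by (left; reflexivity).
  exact (asy_images_limits x x0 (lim x) (lim x0) psi Hpsi (Hlim x Hx) (Hlim x0 Hx0) (Hasy x x0 Hx Hx0)).
Qed.

Lemma separated_tuples_bound (Sc : X -> Prop) :
  (forall l : list X, NoDup l -> length l = (t + 1)%nat -> (forall x, In x l -> Sc x) ->
      exists eps, 0 < eps /\ exists M : nat -> Prop, infinite_nat_set M /\
        forall n, M n -> forall x y, In x l -> In y l -> x <> y ->
          eps <= dX (Nat.iter n f x) (Nat.iter n f y)) ->
  asy_bounded_on p dY g Sc t.
Proof.
  intros HSsep l Hn HS HA. destruct (Compare_dec.le_lt_dec (length l) t) as [|Hlt]; auto. exfalso.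
  destruct (NoDup_sublist_of_length l (S t) Hn Hlt) as [l' [Hn' [Hl' Hi]]].
  destruct (HSsep l' Hn' ltac:(lia) (fun x Hx => HS x (Hi x Hx))) as [eps [Heps [M [HM Hsep]]]].
  apply (separated_tuple_not_asy l' eps M); auto.
Qed.

End SeparatedTuples.

(** * The uncountable case *)

Lemma uncountable_nonempty {X} (S : X -> Prop) : uncountable_subset S -> exists x, S x.
Proof.
  intros HS. apply NNPP; intro H. apply HS. exists (fun _ => 0%nat). intros x y Hx. exfalso; eauto.
Qed.

Lemma uncountable_two_points {X} (S : X -> Prop) :
  uncountable_subset S -> exists x y, S x /\ S y /\ x <> y.
Proof.
  intros HS. apply NNPP; intro H. apply HS. exists (fun _ => 0%nat). intros x y Hx Hy _.
  apply NNPP; intro Hxy. apply H. eauto.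
Qed.

Lemma class_representatives {Y} (E : Y -> Y -> Prop) (P : Y -> Prop) :
  (forall y, E y y) -> (forall y z, E y z -> E z y) -> (forall x y z, E x y -> E y z -> E x z) ->
  (exists y0, P y0) ->
  exists r : Y -> Y, (forall y, P y -> P (r y) /\ E y (r y)) /\ (forall y y', E y y' -> r y = r y').
Proof.
  intros Erefl Esym Etrans [y0 Hy0].
  exists (fun y => epsilon (inhabits y0) (fun y' => P y' /\ E y y')). split.
  - intros y Hy. apply (epsilon_spec (inhabits y0) (fun y' => P y' /\ E y y')). eauto.
  - intros y y' H. f_equal. apply functional_extensionality; intro z.
    apply propositional_extensionality. split; intros [H1 H2]; split; eauto.
Qed.

Lemma uncountable_image_bounded_fibres {X Y} (q : X -> Y) (S : X -> Prop) (T : Y -> Prop) (t : nat) :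
  uncountable_subset S -> (forall x, S x -> T (q x)) ->
  (forall y l, NoDup l -> (forall x, In x l -> S x /\ q x = y) -> (length l <= t)%nat) ->
  uncountable_subset T.
Proof.
  intros HS HST Hfib [h Hh]. apply HS.
  assert (Hfibre : forall y : Y, exists L, NoDup L /\ forall x, In x L <-> (S x /\ q x = y)).
  { intro y. apply (bounded_predicate_enumerable _ t). intros l Hn HP. apply (Hfib y); auto. }
  destruct (choice _ Hfibre) as [L HL].
  assert (Hidx : forall x, exists n, S x -> nth_error (L (q x)) n = Some x).
  { intro x. destruct (classic (S x)) as [H|H].
    - assert (Hin : In x (L (q x))) by (apply HL; auto).
      apply In_nth_error in Hin. destruct Hin as [n Hn]. exists n; auto.
    - exists 0%nat; intro; contradiction. }
  destruct (choice _ Hidx) as [idx Hidx2].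
  exists (fun x => Cantor.to_nat (h (q x), idx x)).
  intros x y Hx Hy Hxy. apply Cantor.to_nat_inj in Hxy. injection Hxy as E1 E2.
  assert (E3 : q x = q y) by (apply Hh; auto).
  pose proof (Hidx2 x Hx) as Ex. pose proof (Hidx2 y Hy) as Ey.
  rewrite E3, E2, Ey in Ex. injection Ex; auto.
Qed.

(* First assertion: one representative per asymptotic class of p(S). *)
Lemma uncountable_scrambled_factor {X Y} (dX : X -> X -> R) (dY : Y -> Y -> R)
  (HdX : is_metric dX) (HdY : is_metric dY) (Hc : compact_space dX)
  (f : X -> X) (g : Y -> Y) (p : X -> Y) (t : nat)
  (Hp : continuous_map dX dY p) (Hcomm : forall x, p (f x) = g (p x))
  (Sc : X -> Prop) (HSunc : uncountable_subset Sc) (HSscr : synd_scrambled dX f Sc)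
  (Hbound : asy_bounded_on p dY g Sc t) :
  exists S' : Y -> Prop, (forall y, S' y -> image p Sc y) /\
     uncountable_subset S' /\ synd_scrambled dY g S'.
Proof.
  destruct (uncountable_nonempty Sc HSunc) as [x0 Hx0].
  destruct (class_representatives (Asy dY g) (image p Sc) (Asy_refl dY HdY g) (Asy_sym dY HdY g)
    (Asy_trans dY HdY g)) as [r [Hr Hr_inv]]; [exists (p x0), x0; auto|].
  set (S' := fun y => image p Sc y /\ r y = y).
  assert (Hunc : uncountable_subset S').
  { apply (uncountable_image_bounded_fibres (fun x => r (p x)) Sc S' t HSunc).
    - intros x Hx. assert (Hi : image p Sc (p x)) by (exists x; auto).
      split; [apply Hr; auto|]. symmetry. apply Hr_inv, Hr; auto.
    - intros y l Hn HP. apply Hbound; auto; [intros x Hx; apply HP; auto|].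
      intros x x' Hx Hx'. destruct (HP x Hx) as [Sx Ex]. destruct (HP x' Hx') as [Sx' Ex'].
      apply (Asy_trans dY HdY g _ (r (p x))); [apply Hr; exists x; auto|].
      rewrite Ex, <- Ex'. apply Asy_sym; auto. apply Hr; exists x'; auto. }
  exists S'. split; [intros y [H _]; auto|]. split; auto. split.
  - apply uncountable_two_points; auto.
  - intros y1 y2 [[x1 [Hx1 <-]] R1] [[x2 [Hx2 <-]] R2] Hne.
    assert (x1 <> x2) by (intro; subst; auto).
    split.
    + apply (sprox_factor dX dY HdX HdY Hc f g p Hp Hcomm). apply HSscr; auto.
    + intro HA. apply Hne. rewrite <- R1, <- R2. apply Hr_inv; auto.
Qed.

(** * Closed balls centred in a set K *)

(* A ball is a pair (centre, radius); [in_ball B z] is membership in the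
   closed ball.  Sub-balls are taken with centres in K, and B' is a sub-ball of
   B when the triangle inequality forces the closed ball B' inside B. *)
Section Balls.
Context {Y : Type} (d : Y -> Y -> R) (Hd : is_metric d) (K : Y -> Prop).

Definition in_ball (B : Y * R) (z : Y) := d (fst B) z <= snd B.
Definition ball_on (B : Y * R) := K (fst B) /\ 0 < snd B.
Definition subball (B' B : Y * R) := K (fst B') /\ 0 < snd B' /\ d (fst B) (fst B') + snd B' <= snd B.
Definition balls_apart (B1 B2 : Y * R) := snd B1 + snd B2 < d (fst B1) (fst B2).

Lemma subball_refl B : ball_on B -> subball B B.
Proof. intros [H1 H2]. repeat split; auto. rewrite (dist_self d Hd). lra. Qed.

Lemma subball_trans B1 B2 B3 : subball B1 B2 -> subball B2 B3 -> subball B1 B3.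
Proof.
  intros [H1 [H2 H3]] [H4 [H5 H6]]. repeat split; auto.
  pose proof (dist_tri d Hd (fst B3) (fst B2) (fst B1)). lra.
Qed.

Lemma subball_ball_on B' B : subball B' B -> ball_on B'.
Proof. intros [H1 [H2 _]]; split; auto. Qed.

Lemma subball_radius B' B : subball B' B -> snd B' <= snd B.
Proof. intros [_ [_ H]]. pose proof (dist_nonneg d Hd (fst B) (fst B')). lra. Qed.

Lemma in_subball B' B z : subball B' B -> in_ball B' z -> in_ball B z.
Proof.
  unfold in_ball. intros [_ [_ H]] H2. pose proof (dist_tri d Hd (fst B) (fst B') z). lra.
Qed.

Lemma subball_shrink B r : ball_on B -> 0 < r <= snd B -> subball (fst B, r) B.
Proof. intros [H1 H2] H3. repeat split; auto; simpl; [lra|]. rewrite (dist_self d Hd). lra. Qed.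

Lemma in_ball_center B : ball_on B -> in_ball B (fst B).
Proof. intros [_ H]. unfold in_ball. rewrite (dist_self d Hd). lra. Qed.

Lemma balls_apart_sym B1 B2 : balls_apart B1 B2 -> balls_apart B2 B1.
Proof. unfold balls_apart. rewrite (dist_sym d Hd). lra. Qed.

Lemma balls_apart_subballs B1 B2 B1' B2' :
  balls_apart B1 B2 -> subball B1' B1 -> subball B2' B2 -> balls_apart B1' B2'.
Proof.
  unfold balls_apart. intros H [_ [_ H1]] [_ [_ H2]].
  pose proof (dist_tri d Hd (fst B1) (fst B1') (fst B2)).
  pose proof (dist_tri d Hd (fst B1') (fst B2') (fst B2)).
  rewrite (dist_sym d Hd (fst B2') (fst B2)) in H3. lra.
Qed.

Lemma balls_apart_distinct B1 B2 z1 z2 : balls_apart B1 B2 -> in_ball B1 z1 -> in_ball B2 z2 -> z1 <> z2.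
Proof.
  unfold balls_apart, in_ball. intros H H1 H2 <-. pose proof (dist_tri d Hd (fst B1) z1 (fst B2)).
  rewrite (dist_sym d Hd z1) in H0. lra.
Qed.

Lemma apart_family_unique (N : nat) (T : nat -> Y * R) j j' z :
  (forall i i', (i < N)%nat -> (i' < N)%nat -> i <> i' -> balls_apart (T i) (T i')) ->
  (j < N)%nat -> (j' < N)%nat -> in_ball (T j) z -> in_ball (T j') z -> j = j'.
Proof.
  intros Hap Hj Hj' H1 H2. apply NNPP; intro E.
  apply (balls_apart_distinct (T j) (T j') z z); auto.
Qed.

Hypothesis Hp : perfect_subset d K.

Lemma split_ball B eps :
  ball_on B -> 0 < eps -> exists B1 B2, subball B1 B /\ subball B2 B /\ balls_apart B1 B2 /\
    snd B1 <= eps /\ snd B2 <= eps.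
Proof.
  intros [HK Hr] He. destruct (Hp (fst B) HK (snd B / 2)) as [y [Ky [Hy1 Hy2]]]; [lra|].
  pose proof (dist_pos d Hd (fst B) y (fun E => Hy1 (eq_sym E))) as Hpos.
  set (r := Rmin eps (Rmin (d (fst B) y / 3) (snd B / 2))).
  assert (r1 : r <= eps) by apply Rmin_l.
  assert (r2 : r <= d (fst B) y / 3) by (eapply Rle_trans; [apply Rmin_r|apply Rmin_l]).
  assert (r3 : r <= snd B / 2) by (eapply Rle_trans; [apply Rmin_r|apply Rmin_r]).
  assert (r0 : 0 < r) by (apply Rmin_glb_lt; [lra|apply Rmin_glb_lt; lra]).
  exists (fst B, r), (y, r). repeat split; simpl; auto; try lra.
  - rewrite (dist_self d Hd); lra.
  - unfold balls_apart; simpl; lra.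
Qed.

Lemma apart_subballs B :
  ball_on B -> forall m, exists Vs : nat -> Y * R, (forall i, (i < m)%nat -> subball (Vs i) B) /\
    forall i j, (i < m)%nat -> (j < m)%nat -> i <> j -> balls_apart (Vs i) (Vs j).
Proof.
  intros HB m. induction m as [|m IH].
  - exists (fun _ => B). split; intros; lia.
  - destruct IH as [Vs [H1 H2]].
    destruct m as [|m].
    { exists (fun _ => B). split; [intros; apply subball_refl; auto|intros; lia]. }
    assert (Hm : subball (Vs m) B) by (apply H1; lia).
    destruct (split_ball (Vs m) 1) as [B1 [B2 [E1 [E2 [E3 _]]]]];
      [eapply subball_ball_on; eauto|lra|].
    (* replace the last ball by the two halves B1, B2 *)
    set (Vs' := fun i => if Nat.eq_dec i m then B1 else if Nat.eq_dec i (S m) then B2 else Vs i).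
    assert (Hsub : forall i, (i < S (S m))%nat -> subball (Vs' i) (Vs (Nat.min i m))).
    { intros i Hi. unfold Vs'. destruct (Nat.eq_dec i m) as [->|]; [rewrite Nat.min_id; auto|].
      destruct (Nat.eq_dec i (S m)) as [->|].
      - replace (Nat.min (S m) m) with m by lia. auto.
      - replace (Nat.min i m) with i by lia. apply subball_refl.
        eapply subball_ball_on; apply H1; lia. }
    exists Vs'. split.
    + intros i Hi. eapply subball_trans; [apply Hsub; auto|apply H1; lia].
    + intros i j Hi Hj Hij.
      destruct (Nat.eq_dec (Nat.min i m) (Nat.min j m)) as [E|E].
      * assert (Hij' : (i = m /\ j = S m) \/ (i = S m /\ j = m)) by lia.
        unfold Vs'. destruct Hij' as [[-> ->]|[-> ->]];
          repeat (destruct Nat.eq_dec; try lia); auto using balls_apart_sym.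
      * apply (balls_apart_subballs (Vs (Nat.min i m)) (Vs (Nat.min j m))); auto.
        apply H2; lia.
Qed.

Hypothesis HK : compact_subset d K.

Lemma nested_balls_point (Bs : nat -> Y * R) :
  (forall k, subball (Bs (S k)) (Bs k)) -> ball_on (Bs 0%nat) ->
  exists z, K z /\ forall k, in_ball (Bs k) z.
Proof.
  intros Hn H0.
  assert (Hv : forall k, ball_on (Bs k)).
  { intro k; destruct k; auto. eapply subball_ball_on; apply Hn. }
  assert (Hch : forall m k z, (k <= m)%nat -> in_ball (Bs m) z -> in_ball (Bs k) z).
  { intros m k z Hkm. induction Hkm; auto. intro H. apply IHHkm. eapply in_subball; eauto. }
  apply NNPP; intro Hne.
  destruct (HK nat (fun k z => snd (Bs k) < d (fst (Bs k)) z)) as [l Hl].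
  { intro k. apply open_ball_exterior; auto. }
  { intros z Kz. apply NNPP; intro H1. apply Hne. exists z. split; auto. intro k.
    unfold in_ball. apply Rnot_lt_le. intro H2. apply H1. exists k; auto. }
  destruct (list_nat_bound (fun k => k) l) as [m Hm].
  destruct (Hl (fst (Bs m)) (proj1 (Hv m))) as [k [Hk1 Hk2]].
  pose proof (Hch m k (fst (Bs m)) (Hm k Hk1) (in_ball_center _ (Hv m))). unfold in_ball in H. lra.
Qed.

End Balls.

Section BallDynamics.
Context {Y : Type} (d : Y -> Y -> R) (Hd : is_metric d) (K : Y -> Prop) (g : Y -> Y).

Definition dense_far (k : nat) (U V : Y * R) :=
  forall U' V', subball d K U' U -> subball d K V' V ->
   exists u v, K u /\ K v /\ in_ball d U' u /\ in_ball d V' v /\ far_often d g k u v.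

Definition never_far (k : nat) (A B : Y * R) :=
  forall u v, K u -> K v -> in_ball d A u -> in_ball d B v -> ~ far_often d g k u v.

Definition separated_at (s k : nat) (U V : Y * R) :=
  exists n, (s <= n)%nat /\ forall u v, K u -> K v -> in_ball d U u -> in_ball d V v ->
    / INR (S k) < d (Nat.iter n g u) (Nat.iter n g v).

Lemma dense_far_subballs k U V U' V' :
  dense_far k U V -> subball d K U' U -> subball d K V' V -> dense_far k U' V'.
Proof. intros H H1 H2 U'' V'' H3 H4. apply H; eapply subball_trans; eauto. Qed.

Lemma never_far_subballs k U V U' V' :
  never_far k U V -> subball d K U' U -> subball d K V' V -> never_far k U' V'.
Proof. intros H H1 H2 u v Ku Kv Hu Hv. apply H; auto; eapply in_subball; eauto. Qed.

Lemma separated_at_subballs s k U V U' V' :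
  separated_at s k U V -> subball d K U' U -> subball d K V' V -> separated_at s k U' V'.
Proof.
  intros [n [Hn H]] H1 H2. exists n. split; auto.
  intros u v Ku Kv Hu Hv. apply H; auto; eapply in_subball; eauto.
Qed.

Lemma dense_far_sym k U V : dense_far k U V -> dense_far k V U.
Proof.
  intros H V' U' H1 H2. destruct (H U' V' H2 H1) as [u [v [Ku [Kv [Hu [Hv HD]]]]]].
  exists v, u. repeat split; auto.
  intro N. destruct (HD N) as [n [Hn Hlt]]. exists n. split; auto. rewrite (dist_sym d Hd). auto.
Qed.

Lemma not_dense_far_never_far U V :
  ~ (exists k U' V', subball d K U' U /\ subball d K V' V /\ dense_far k U' V') ->
  forall k U' V', subball d K U' U -> subball d K V' V ->
    exists U'' V'', subball d K U'' U' /\ subball d K V'' V' /\ never_far k U'' V''.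
Proof.
  intros Hn k U' V' H1 H2. apply NNPP; intro H. apply Hn. exists k, U', V'. do 2 (split; [auto|]).
  intros U'' V'' H3 H4. apply NNPP; intro H5. apply H. exists U'', V''. do 2 (split; [auto|]).
  intros u v Ku Kv Hu Hv HD. apply H5. exists u, v; auto.
Qed.

Lemma never_far_finitely_many k U V
  (Hav : forall U' V', subball d K U' U -> subball d K V' V ->
     exists U'' V'', subball d K U'' U' /\ subball d K V'' V' /\ never_far k U'' V'')
  (W : Y * R) (Vs : nat -> Y * R) (m : nat) :
  subball d K W U -> (forall i, (i < m)%nat -> subball d K (Vs i) V) ->
  exists W' Vs', subball d K W' W /\ (forall i, (i < m)%nat -> subball d K (Vs' i) (Vs i)) /\
    forall i, (i < m)%nat -> never_far k W' (Vs' i).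
Proof.
  intros HW HVs. induction m as [|m IH].
  - exists W, Vs. split; [|split; intros; lia].
    apply subball_refl; auto. eapply subball_ball_on; eauto.
  - destruct IH as [W1 [Vs1 [E1 [E2 E3]]]]; [intros; apply HVs; lia|].
    destruct (Hav W1 (Vs m)) as [W2 [V2 [F1 [F2 F3]]]];
      [eapply subball_trans; eauto|apply HVs; lia|].
    exists W2, (fun i => if Nat.eq_dec i m then V2 else Vs1 i). split; [eapply subball_trans; eauto|].
    split.
    + intros i Hi. destruct (Nat.eq_dec i m) as [->|]; auto. apply E2; lia.
    + intros i Hi. destruct (Nat.eq_dec i m) as [->|]; auto.
      apply (never_far_subballs k W1 (Vs1 i)); [apply E3; lia|auto|].
      apply subball_refl; auto. eapply subball_ball_on; apply E2; lia.
Qed.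

(* By continuity of g^n, a dense_far pair of balls can be shrunk so that all
   their points are 1/(k+1)-far at one time n >= s. *)
Lemma separate_dense_far (Hg : continuous_map d d g) s k U V :
  ball_on K U -> ball_on K V -> dense_far k U V ->
  exists U' V', subball d K U' U /\ subball d K V' V /\ separated_at s k U' V'.
Proof.
  intros HU HV HD.
  destruct (HD (fst U, snd U / 2) (fst V, snd V / 2)) as [u [v [Ku [Kv [Hu [Hv HDk]]]]]];
    [apply subball_shrink; auto; destruct HU; lra|apply subball_shrink; auto; destruct HV; lra|].
  destruct (HDk s) as [n [Hn Hgt]].
  set (D := d (Nat.iter n g u) (Nat.iter n g v)) in *.
  set (e := (D - / INR (S k)) / 2).
  assert (He : 0 < e) by (unfold e; lra).
  destruct (iter_continuous d g Hg n u e He) as [d1 [Hd1 H1]].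
  destruct (iter_continuous d g Hg n v e He) as [d2 [Hd2 H2]].
  destruct HU as [KU HrU]. destruct HV as [KV HrV]. unfold in_ball in Hu, Hv; simpl in Hu, Hv.
  set (r1 := Rmin (d1/2) (snd U / 2)). set (r2 := Rmin (d2/2) (snd V / 2)).
  assert (r1a : r1 <= d1/2) by apply Rmin_l. assert (r1b : r1 <= snd U/2) by apply Rmin_r.
  assert (r2a : r2 <= d2/2) by apply Rmin_l. assert (r2b : r2 <= snd V/2) by apply Rmin_r.
  assert (r1p : 0 < r1) by (apply Rmin_glb_lt; lra). assert (r2p : 0 < r2) by (apply Rmin_glb_lt; lra).
  exists (u, r1), (v, r2). split; [|split].
  - split; [simpl; auto|]. simpl. split; lra.
  - split; [simpl; auto|]. simpl. split; lra.
  - exists n. split; auto. intros u' v' Ku' Kv' Hu' Hv'. unfold in_ball in Hu', Hv'. simpl in Hu', Hv'.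
    specialize (H1 u' ltac:(lra)). specialize (H2 v' ltac:(lra)).
    pose proof (dist_tri d Hd (Nat.iter n g u) (Nat.iter n g u') (Nat.iter n g v)).
    pose proof (dist_tri d Hd (Nat.iter n g u') (Nat.iter n g v') (Nat.iter n g v)).
    rewrite (dist_sym d Hd (Nat.iter n g v') (Nat.iter n g v)) in H0. unfold e, D in *. lra.
Qed.

Hypothesis HK : compact_subset d K.
Hypothesis Hp : perfect_subset d K.
Variable t : nat.
Hypothesis Hbound : asy_bounded_on (fun y => y) d g K t.

(* Otherwise
   shrink U against t+1 apart sub-balls of V at every scale k; the nested
   intersections give u in U asymptotic to t+1 distinct points of V, which
   are then pairwise asymptotic points of K. *)
Lemma dense_far_pair U V : ball_on K U -> ball_on K V ->
  exists k U' V', subball d K U' U /\ subball d K V' V /\ dense_far k U' V'.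
Proof.
  intros HU HV. apply NNPP; intro Hn.
  pose proof (not_dense_far_never_far U V Hn) as Hav.
  destruct (apart_subballs d Hd K Hp V HV (S t)) as [Vs0 [HV1 HV2]].
  assert (HV0 : forall i, (i < S t)%nat -> ball_on K (Vs0 i)) by (intros; eapply subball_ball_on; eauto).
  destruct (dependent_choice (fun k (a : (Y * R) * (nat -> Y * R)) => subball d K (fst a) U /\
        forall i, (i < S t)%nat -> subball d K (snd a i) (Vs0 i))
     (fun k a b => subball d K (fst b) (fst a) /\
        (forall i, (i < S t)%nat -> subball d K (snd b i) (snd a i)) /\
        forall i, (i < S t)%nat -> never_far k (fst b) (snd b i)) (U, Vs0)) as [F [HF0 HF]].
  { simpl. split; [apply subball_refl; auto|intros i Hi; apply subball_refl; auto]. }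
  { intros k [W Vs] [H1 H2]. simpl in *.
    destruct (never_far_finitely_many k U V (Hav k) W Vs (S t) H1) as [W' [Vs' [E1 [E2 E3]]]].
    { intros i Hi. eapply (subball_trans d Hd K); [apply H2|apply HV1]; auto. }
    exists (W', Vs'). simpl. split; [split|split; [|split]]; auto.
    - eapply (subball_trans d Hd K); eauto.
    - intros i Hi. eapply (subball_trans d Hd K); eauto. }
  destruct (nested_balls_point d Hd K HK (fun k => fst (F k))) as [u [Ku Hu]];
    [intro k; apply HF|rewrite HF0; auto|].
  assert (Hvc : forall i, exists v, (i < S t)%nat -> K v /\ forall k, in_ball d (snd (F k) i) v).
  { intro i. destruct (Compare_dec.lt_dec i (S t)) as [Hi|Hi]; [|exists u; intros; lia].
    destruct (nested_balls_point d Hd K HK (fun k => snd (F k) i)) as [v [Kv Hv]];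
      [intro k; apply HF; auto|rewrite HF0; auto|].
    exists v; auto. }
  destruct (choice _ Hvc) as [v Hv].
  assert (HA : forall i, (i < S t)%nat -> Asy d g u (v i)).
  { intros i Hi. apply not_far_often_Asy; auto. intro k. destruct (HF k) as [_ [_ [_ H]]].
    apply (H i Hi); auto; apply Hv; auto. }
  assert (Hlen : (length (map v (seq 0 (S t))) <= t)%nat); [|rewrite length_map, length_seq in Hlen; lia].
  apply Hbound.
  - apply NoDup_map_inj_on; [apply seq_NoDup|]. intros i j Hi Hj Hij. apply in_seq in Hi, Hj.
    apply NNPP; intro Hne. apply (balls_apart_distinct d Hd (Vs0 i) (Vs0 j) (v i) (v j)); [apply HV2; lia| | |exact Hij].
    + pose proof (proj2 (Hv i ltac:(lia)) 0%nat) as H. rewrite HF0 in H. exact H.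
    + pose proof (proj2 (Hv j ltac:(lia)) 0%nat) as H. rewrite HF0 in H. exact H.
  - intros y Hy. apply in_map_iff in Hy. destruct Hy as [i [<- Hi]]. apply in_seq in Hi. apply Hv. lia.
  - intros y z Hy Hz. apply in_map_iff in Hy, Hz. destruct Hy as [i [<- Hi]]. destruct Hz as [j [<- Hj]].
    apply in_seq in Hi, Hj. apply (Asy_trans d Hd g _ u); [apply Asy_sym; auto|]; apply HA; lia.
Qed.

End BallDynamics.

Lemma refine_all_pairs {Y} (d : Y -> Y -> R) (Hd : is_metric d) (K : Y -> Prop) (N : nat)
  (P Q : nat -> nat -> Y * R -> Y * R -> Prop)
  (Pher : forall i j U V U' V', P i j U V -> subball d K U' U -> subball d K V' V -> P i j U' V')
  (Qher : forall i j U V U' V', Q i j U V -> subball d K U' U -> subball d K V' V -> Q i j U' V')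
  (Qach : forall i j U V, (i < N)%nat -> (j < N)%nat -> i <> j -> ball_on K U -> ball_on K V ->
      P i j U V -> exists U' V', subball d K U' U /\ subball d K V' V /\ Q i j U' V')
  (T : nat -> Y * R) (HT : forall j, (j < N)%nat -> ball_on K (T j))
  (HP : forall i j, (i < N)%nat -> (j < N)%nat -> i <> j -> P i j (T i) (T j)) :
  exists T', (forall j, (j < N)%nat -> subball d K (T' j) (T j)) /\
    forall i j, (i < N)%nat -> (j < N)%nat -> i <> j -> Q i j (T' i) (T' j).
Proof.
  assert (H : forall l : list (nat * nat), exists T', (forall j, (j < N)%nat -> subball d K (T' j) (T j)) /\
     forall i j, In (i, j) l -> (i < N)%nat -> (j < N)%nat -> i <> j -> Q i j (T' i) (T' j)).
  { induction l as [|[i j] l IH].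
    - exists T. split; [intros; apply subball_refl; auto|intros i j []].
    - destruct IH as [T1 [H1 H2]].
      assert (Hv1 : forall k, (k < N)%nat -> ball_on K (T1 k)) by (intros; eapply subball_ball_on; eauto).
      destruct (classic ((i < N)%nat /\ (j < N)%nat /\ i <> j)) as [[Hi [Hj Hij]]|Hno].
      2:{ exists T1. split; auto. intros i' j' [E|Hin] Hi' Hj' Hij'; [|apply H2; auto].
          injection E as <- <-. exfalso; apply Hno; auto. }
      destruct (Qach i j (T1 i) (T1 j) Hi Hj Hij (Hv1 i Hi) (Hv1 j Hj)) as [U' [V' [E1 [E2 E3]]]];
        [apply (Pher i j (T i) (T j)); auto|].
      set (T2 := fun k => if Nat.eq_dec k j then V' else if Nat.eq_dec k i then U' else T1 k).
      assert (Hr : forall k, (k < N)%nat -> subball d K (T2 k) (T1 k)).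
      { intros k Hk. unfold T2. destruct (Nat.eq_dec k j) as [->|]; auto.
        destruct (Nat.eq_dec k i) as [->|]; auto. apply subball_refl; auto. }
      assert (Ei : T2 i = U') by (unfold T2; repeat destruct Nat.eq_dec; auto; lia).
      assert (Ej : T2 j = V') by (unfold T2; repeat destruct Nat.eq_dec; auto; lia).
      exists T2. split.
      + intros k Hk. apply (subball_trans d Hd K _ (T1 k)); auto.
      + intros i' j' [E|Hin] Hi' Hj' Hij'.
        * injection E as <- <-. rewrite Ei, Ej. auto.
        * apply (Qher i' j' (T1 i') (T1 j')); auto. }
  destruct (H (list_prod (seq 0 N) (seq 0 N))) as [T' [H1 H2]].
  exists T'. split; auto. intros i j Hi Hj Hij. apply H2; auto. apply in_prod; apply in_seq; lia.
Qed.

(** * Dyadic levels *)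

(* Arithmetic of dyadic indices: the children of q are 2q and 2q+1. *)
Lemma pow2_succ s : (2 ^ S s = 2 * 2 ^ s)%nat.
Proof. reflexivity. Qed.

Lemma parity_cases j :
  (Nat.odd j = false /\ j = 2 * Nat.div2 j)%nat \/ (Nat.odd j = true /\ j = S (2 * Nat.div2 j))%nat.
Proof. pose proof (Nat.div2_odd j). destruct (Nat.odd j); simpl in H; [right|left]; split; auto; lia. Qed.

Lemma div2_lt_pow2 j s : (j < 2 ^ S s)%nat -> (Nat.div2 j < 2 ^ s)%nat.
Proof. rewrite pow2_succ. intro H. pose proof (Nat.div2_odd j). destruct (Nat.odd j); simpl in H0; lia. Qed.

Lemma parity_double q : Nat.odd (2 * q) = false /\ Nat.div2 (2 * q) = q.
Proof.
  pose proof (Nat.div2_odd (2 * q)). rewrite Nat.div2_double in *. split; auto.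
  destruct (Nat.odd (2 * q)); simpl in H; auto; lia.
Qed.

Lemma parity_succ_double q : Nat.odd (S (2 * q)) = true /\ Nat.div2 (S (2 * q)) = q.
Proof.
  pose proof (Nat.div2_odd (S (2 * q))). rewrite Nat.div2_succ_double in *. split; auto.
  destruct (Nat.odd (S (2 * q))); simpl in H; auto; lia.
Qed.

Section Levels.
Context {Y : Type} (d : Y -> Y -> R) (Hd : is_metric d) (K : Y -> Prop) (g : Y -> Y).

Definition level_ok (s : nat) (T : nat -> Y * R) (Kf : nat -> nat -> nat) :=
  (forall j, (j < 2 ^ s)%nat -> ball_on K (T j) /\ snd (T j) <= / INR (S s)) /\
  (forall i j, (i < 2 ^ s)%nat -> (j < 2 ^ s)%nat -> i <> j ->
     balls_apart d (T i) (T j) /\ dense_far d K g (Kf i j) (T i) (T j) /\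
     separated_at d K g s (Kf i j) (T i) (T j)).

Definition level_refines (s : nat) (T : nat -> Y * R) (Kf : nat -> nat -> nat)
  (T' : nat -> Y * R) (Kf' : nat -> nat -> nat) :=
  (forall q, (q < 2 ^ s)%nat -> subball d K (T' (2 * q)%nat) (T q) /\ subball d K (T' (S (2 * q))) (T q)) /\
  (forall i j q r, (q < 2 ^ s)%nat -> (r < 2 ^ s)%nat -> q <> r ->
      (i = 2 * q \/ i = S (2 * q))%nat -> (j = 2 * r \/ j = S (2 * r))%nat -> Kf' i j = Kf q r).

Definition split_data (B : Y * R) (eps : R) (w : (Y * R) * (Y * R) * nat) :=
  subball d K (fst (fst w)) B /\ subball d K (snd (fst w)) B /\ balls_apart d (fst (fst w)) (snd (fst w)) /\
  snd (fst (fst w)) <= eps /\ snd (snd (fst w)) <= eps /\ dense_far d K g (snd w) (fst (fst w)) (snd (fst w)).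

Lemma split_data_exists (HK : compact_subset d K) (Hp : perfect_subset d K) (t : nat)
  (Hbound : asy_bounded_on (fun y => y) d g K t) B eps :
  ball_on K B -> 0 < eps -> exists w, split_data B eps w.
Proof.
  intros HB He. destruct (split_ball d Hd K Hp B eps HB He) as [B1 [B2 [E1 [E2 [E3 [E4 E5]]]]]].
  destruct (dense_far_pair d Hd K g HK Hp t Hbound B1 B2) as [k [B1' [B2' [F1 [F2 F3]]]]];
    try (eapply subball_ball_on; eauto).
  exists (B1', B2', k). pose proof (subball_radius d Hd K _ _ F1). pose proof (subball_radius d Hd K _ _ F2).
  unfold split_data; simpl. split; [|split; [|split; [|split; [|split]]]]; auto; try lra.
  - eapply (subball_trans d Hd K); eauto.
  - eapply (subball_trans d Hd K); eauto.
  - eapply (balls_apart_subballs d Hd K); eauto.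
Qed.

Definition child (P : nat -> (Y * R) * (Y * R) * nat) (j : nat) :=
  if Nat.odd j then snd (fst (P (Nat.div2 j))) else fst (fst (P (Nat.div2 j))).

Definition child_scale (P : nat -> (Y * R) * (Y * R) * nat) (Kf : nat -> nat -> nat) (i j : nat) :=
  if Nat.eq_dec (Nat.div2 i) (Nat.div2 j) then snd (P (Nat.div2 i)) else Kf (Nat.div2 i) (Nat.div2 j).

Section Children.
Variables (s : nat) (T : nat -> Y * R) (Kf : nat -> nat -> nat) (P : nat -> (Y * R) * (Y * R) * nat).
Hypothesis HT : level_ok s T Kf.
Hypothesis HP : forall q, (q < 2 ^ s)%nat -> split_data (T q) (/ INR (S (S s))) (P q).

Lemma child_subball j : (j < 2 ^ S s)%nat ->
  subball d K (child P j) (T (Nat.div2 j)) /\ snd (child P j) <= / INR (S (S s)).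
Proof.
  intros Hj. destruct (HP _ (div2_lt_pow2 j s Hj)) as [E1 [E2 [_ [E4 [E5 _]]]]].
  unfold child. destruct (Nat.odd j); auto.
Qed.

Lemma child_siblings i j : (i < 2 ^ S s)%nat -> i <> j -> Nat.div2 i = Nat.div2 j ->
  balls_apart d (child P i) (child P j) /\ dense_far d K g (child_scale P Kf i j) (child P i) (child P j).
Proof.
  intros Hi Hij Ed. destruct (HP _ (div2_lt_pow2 i s Hi)) as [E1 [E2 [E3 [_ [_ E6]]]]].
  unfold child_scale. destruct (Nat.eq_dec (Nat.div2 i) (Nat.div2 j)) as [_|]; [|lia].
  unfold child. rewrite <- Ed.
  destruct (parity_cases i) as [[Oi Ei]|[Oi Ei]]; destruct (parity_cases j) as [[Oj Ej]|[Oj Ej]];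
    rewrite Oi, Oj; try lia; auto.
  split; [apply balls_apart_sym; auto|apply dense_far_sym; auto].
Qed.

Lemma child_apart_dense i j : (i < 2 ^ S s)%nat -> (j < 2 ^ S s)%nat -> i <> j ->
  balls_apart d (child P i) (child P j) /\ dense_far d K g (child_scale P Kf i j) (child P i) (child P j).
Proof.
  intros Hi Hj Hij. destruct (Nat.eq_dec (Nat.div2 i) (Nat.div2 j)) as [E|E]; [apply child_siblings; auto|].
  destruct (proj2 HT (Nat.div2 i) (Nat.div2 j) (div2_lt_pow2 i s Hi) (div2_lt_pow2 j s Hj) E)
    as [A1 [A2 _]].
  unfold child_scale. destruct (Nat.eq_dec (Nat.div2 i) (Nat.div2 j)); [lia|]. split.
  - apply (balls_apart_subballs d Hd K (T (Nat.div2 i)) (T (Nat.div2 j))); auto; apply child_subball; auto.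
  - apply (dense_far_subballs d Hd K g _ (T (Nat.div2 i)) (T (Nat.div2 j))); auto; apply child_subball; auto.
Qed.

End Children.

(* One step of the construction: split every ball of level s, then shrink the
   children pairwise so that each pair is separated at a time >= s+1. *)
Lemma level_step (HK : compact_subset d K) (Hp : perfect_subset d K) (Hg : continuous_map d d g)
  (t : nat) (Hbound : asy_bounded_on (fun y => y) d g K t) s T Kf :
  level_ok s T Kf -> exists T' Kf', level_ok (S s) T' Kf' /\ level_refines s T Kf T' Kf'.
Proof.
  intros HT.
  assert (HP : forall q, exists w, (q < 2 ^ s)%nat -> split_data (T q) (/ INR (S (S s))) w).
  { intro q. destruct (Compare_dec.lt_dec q (2 ^ s)) as [Hq|Hq]; [|exists (T q, T q, 0%nat); intros; lia].
    destruct (split_data_exists HK Hp t Hbound (T q) (/ INR (S (S s)))) as [w Hw];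
      [apply HT; auto|apply inv_succ_pos|exists w; auto]. }
  destruct (choice _ HP) as [P HPs].
  destruct (refine_all_pairs d Hd K (2 ^ S s)
     (fun i j U V => dense_far d K g (child_scale P Kf i j) U V)
     (fun i j U V => separated_at d K g (S s) (child_scale P Kf i j) U V))
     with (T := child P) as [T' [H1 H2]].
  { intros i j U V U' V'. apply (dense_far_subballs d Hd). }
  { intros i j U V U' V'. apply (separated_at_subballs d Hd). }
  { intros i j U V _ _ _ HU HV HD. apply separate_dense_far; auto. }
  { intros j Hj. eapply subball_ball_on; apply (child_subball s T P HPs j Hj). }
  { intros i j Hi Hj Hij. apply (child_apart_dense s T Kf P HT HPs i j Hi Hj Hij). }
  exists T', (child_scale P Kf). split; [split|split].
  - intros j Hj. split; [eapply subball_ball_on; eauto|].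
    pose proof (subball_radius d Hd K _ _ (H1 j Hj)). pose proof (proj2 (child_subball s T P HPs j Hj)). lra.
  - intros i j Hi Hj Hij. destruct (child_apart_dense s T Kf P HT HPs i j Hi Hj Hij) as [A1 A2].
    split; [|split; auto].
    + apply (balls_apart_subballs d Hd K (child P i) (child P j)); auto.
    + apply (dense_far_subballs d Hd K g _ (child P i) (child P j)); auto.
  - intros q Hq. destruct (parity_double q) as [_ E1]. destruct (parity_succ_double q) as [_ E2].
    split.
    + apply (subball_trans d Hd K _ (child P (2 * q))); [apply H1; rewrite pow2_succ; lia|].
      rewrite <- E1 at 2. apply (child_subball s T P HPs). rewrite pow2_succ; lia.
    + apply (subball_trans d Hd K _ (child P (S (2 * q)))); [apply H1; rewrite pow2_succ; lia|].
      rewrite <- E2 at 2. apply (child_subball s T P HPs). rewrite pow2_succ; lia.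
  - intros i j q r Hq Hr Hqr Hi Hj. unfold child_scale.
    assert (Nat.div2 i = q) by (destruct Hi as [->| ->]; [apply parity_double|apply parity_succ_double]).
    assert (Nat.div2 j = r) by (destruct Hj as [->| ->]; [apply parity_double|apply parity_succ_double]).
    subst q r. destruct (Nat.eq_dec (Nat.div2 i) (Nat.div2 j)); [lia|auto].
Qed.

End Levels.

(** * The Cantor set of a nested dyadic family of levels *)

(* Branches of the dyadic tree: a s is the index of a ball at level s and
   a (s+1) is one of its two children. *)
Definition branch (a : nat -> nat) :=
  a 0%nat = 0%nat /\ forall s, (a (S s) = 2 * a s \/ a (S s) = S (2 * a s))%nat.

Lemma branch_lt a : branch a -> forall s, (a s < 2 ^ s)%nat.
Proof.
  intros [H0 H] s. induction s; [rewrite H0; simpl; lia|]. rewrite pow2_succ. destruct (H s); lia.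
Qed.

Lemma branch_diverge_after a b m : branch a -> branch b -> a m <> b m -> forall s, (m <= s)%nat -> a s <> b s.
Proof.
  intros Ha Hb Hm s Hs. induction Hs; auto. intro E. apply IHHs.
  destruct (proj2 Ha m0), (proj2 Hb m0); lia.
Qed.

Lemma branch_flip a s : branch a ->
  exists b, branch b /\ (forall k, (k <= s)%nat -> b k = a k) /\ b (S s) <> a (S s).
Proof.
  intros Ha.
  set (fl := if Nat.eq_dec (a (S s)) (2 * a s)%nat then S (2 * a s) else (2 * a s)%nat).
  assert (Hfl : fl <> a (S s) /\ (fl = 2 * a s \/ fl = S (2 * a s))%nat).
  { unfold fl. destruct (proj2 Ha s); destruct (Nat.eq_dec (a (S s)) (2 * a s)); lia. }
  exists (fun k => if Compare_dec.le_dec k s then a k else (fl * 2 ^ (k - S s))%nat).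
  split; [split|split].
  - destruct (Compare_dec.le_dec 0 s); [apply Ha|lia].
  - intro k. destruct (Compare_dec.le_dec (S k) s); destruct (Compare_dec.le_dec k s); try lia.
    + apply Ha.
    + replace (S k - S s)%nat with 0%nat by lia. replace k with s by lia. rewrite Nat.mul_1_r. apply Hfl.
    + left. replace (S k - S s)%nat with (S (k - S s)) by lia. rewrite pow2_succ. lia.
  - intros k Hk. destruct (Compare_dec.le_dec k s); [auto|lia].
  - destruct (Compare_dec.le_dec (S s) s); [lia|]. rewrite Nat.sub_diag, Nat.mul_1_r. apply Hfl.
Qed.

Section TreeSet.
Context {Y : Type} (d : Y -> Y -> R) (Hd : is_metric d) (K : Y -> Prop) (g : Y -> Y).
Variables (T : nat -> nat -> Y * R) (Kf : nat -> nat -> nat -> nat).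
Hypothesis Hlev : forall s, level_ok d K g s (T s) (Kf s).
Hypothesis Href : forall s, level_refines d K s (T s) (Kf s) (T (S s)) (Kf (S s)).

Definition tree_set (z : Y) := K z /\ exists a, branch a /\ forall s, in_ball d (T s (a s)) z.

Lemma level_ball_on s j : (j < 2 ^ s)%nat -> ball_on K (T s j).
Proof. intros Hj. apply (Hlev s); auto. Qed.

Lemma level_radius s j : (j < 2 ^ s)%nat -> snd (T s j) <= / INR (S s).
Proof. intros Hj. apply (Hlev s); auto. Qed.

Lemma level_apart s i j : (i < 2 ^ s)%nat -> (j < 2 ^ s)%nat -> i <> j -> balls_apart d (T s i) (T s j).
Proof. intros Hi Hj Hij. apply (Hlev s); auto. Qed.

Lemma level_unique s j j' z : (j < 2 ^ s)%nat -> (j' < 2 ^ s)%nat ->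
  in_ball d (T s j) z -> in_ball d (T s j') z -> j = j'.
Proof. apply (apart_family_unique d Hd (2 ^ s) (T s)). intros; apply level_apart; auto. Qed.

Lemma in_parent_ball s j z : (j < 2 ^ S s)%nat -> in_ball d (T (S s) j) z -> in_ball d (T s (Nat.div2 j)) z.
Proof.
  intros Hj H. pose proof (div2_lt_pow2 j s Hj) as Hq.
  destruct (parity_cases j) as [[_ E]|[_ E]]; remember (Nat.div2 j) as q; subst j;
    eapply (in_subball d Hd K); eauto; apply (Href s); auto.
Qed.

Lemma branch_nested a : branch a -> forall s, subball d K (T (S s) (a (S s))) (T s (a s)).
Proof.
  intros Ha s. pose proof (branch_lt a Ha s). destruct (proj2 Ha s) as [E|E]; rewrite E; apply (Href s); auto.
Qed.

(* Two points lying in the balls of the same branch coincide, since the radii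
   tend to 0. *)
Lemma branch_same_point a x y : branch a ->
  (forall s, in_ball d (T s (a s)) x) -> (forall s, in_ball d (T s (a s)) y) -> x = y.
Proof.
  intros Ha Hx Hy. apply (eq_of_dist_small d Hd). intros e He.
  destruct (inv_succ_lt (e/2)) as [s Hs]; [lra|].
  specialize (Hx s). specialize (Hy s). unfold in_ball in Hx, Hy.
  pose proof (level_radius s (a s) (branch_lt a Ha s)).
  pose proof (dist_tri d Hd x (fst (T s (a s))) y). rewrite (dist_sym d Hd x (fst (T s (a s)))) in H0. lra.
Qed.

Lemma branches_diverge a b x y : branch a -> branch b ->
  (forall s, in_ball d (T s (a s)) x) -> (forall s, in_ball d (T s (b s)) y) ->
  x <> y -> exists m, a m <> b m.
Proof.
  intros Ha Hb Hx Hy Hxy. apply NNPP; intro H. apply Hxy. apply (branch_same_point a x y Ha Hx).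
  intro s. replace (a s) with (b s); auto. apply NNPP; intro H'. apply H; eauto.
Qed.

Lemma branch_scale_constant a b m : branch a -> branch b -> a m <> b m ->
  forall s, (m <= s)%nat -> Kf s (a s) (b s) = Kf m (a m) (b m).
Proof.
  intros Ha Hb Hm s Hs. induction Hs; auto. rewrite <- IHHs. apply (Href m0).
  - apply branch_lt; auto.
  - apply branch_lt; auto.
  - apply (branch_diverge_after a b m); auto.
  - apply Ha.
  - apply Hb.
Qed.

(* Distinct points of the tree set are not asymptotic: they are separated at
   the fixed scale of their branches at times >= every s. *)
Lemma tree_set_not_asy x y : tree_set x -> tree_set y -> x <> y -> ~ Asy d g x y.
Proof.
  intros [Kx [a [Ha Hxa]]] [Ky [b [Hb Hyb]]] Hxy HA.
  destruct (branches_diverge a b x y Ha Hb Hxa Hyb Hxy) as [m Hm].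
  destruct (HA (/ INR (S (Kf m (a m) (b m)))) (inv_succ_pos _)) as [N HN].
  destruct (proj2 (Hlev (N + m)%nat) (a (N + m)%nat) (b (N + m)%nat) (branch_lt a Ha _) (branch_lt b Hb _)
     (branch_diverge_after a b m Ha Hb Hm (N + m)%nat ltac:(lia))) as [_ [_ [n [Hn Hsep]]]].
  rewrite (branch_scale_constant a b m Ha Hb Hm) in Hsep by lia.
  specialize (Hsep x y Kx Ky (Hxa _) (Hyb _)). specialize (HN n ltac:(lia)). lra.
Qed.

Hypothesis HK : compact_subset d K.

Lemma branch_point a : branch a -> exists z, K z /\ forall s, in_ball d (T s (a s)) z.
Proof.
  intros Ha. apply (nested_balls_point d Hd K HK (fun s => T s (a s))); [apply branch_nested; auto|].
  apply level_ball_on. apply branch_lt; auto.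
Qed.

Lemma tree_set_nonempty : exists z, tree_set z.
Proof.
  assert (H0 : branch (fun _ => 0%nat)) by (split; [reflexivity|intro s; left; lia]).
  destruct (branch_point _ H0) as [z [Kz Hz]]. exists z. split; eauto.
Qed.

Lemma in_every_level_tree_set z : K z ->
  (forall s, exists j, (j < 2 ^ s)%nat /\ in_ball d (T s j) z) -> tree_set z.
Proof.
  intros Kz Hall. destruct (choice _ Hall) as [a Ha].
  split; auto. exists a. split; [split|intro s; apply Ha].
  - destruct (Ha 0%nat) as [H0 _]. simpl in H0. lia.
  - intro s. destruct (Ha (S s)) as [H1 H2].
    assert (Hq : Nat.div2 (a (S s)) = a s).
    { apply (level_unique s _ _ z); [apply div2_lt_pow2; auto|apply Ha|apply in_parent_ball; auto|apply Ha]. }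
    destruct (parity_cases (a (S s))) as [[_ E]|[_ E]]; rewrite Hq in E; auto.
Qed.

Lemma outside_level_open s : Defs.open_set d (fun z => forall j, (j < 2 ^ s)%nat -> snd (T s j) < d (fst (T s j)) z).
Proof.
  intros z Hz.
  destruct (nat_common_radius (2 ^ s) (fun j e => forall w, d z w < e -> snd (T s j) < d (fst (T s j)) w))
    as [e [He He2]].
  { intros j e e' H1 H2 w Hw. apply H1. lra. }
  { intros j Hj. exists (d (fst (T s j)) z - snd (T s j)). split; [specialize (Hz j Hj); lra|].
    intros w Hw. pose proof (dist_tri d Hd (fst (T s j)) w z). rewrite (dist_sym d Hd w z) in H. lra. }
  exists e. split; [exact He|]. intros w Hw j Hj. apply He2; auto.
Qed.

(* The tree set is compact: a cover of it together with the open sets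
   "outside level s" covers the compact set K. *)
Lemma tree_set_compact : compact_subset d tree_set.
Proof.
  intros I U HU Hcov.
  set (O := fun s z => forall j, (j < 2 ^ s)%nat -> snd (T s j) < d (fst (T s j)) z).
  destruct (HK (I + nat)%type (fun e => match e with inl i => U i | inr s => O s end)) as [l Hl].
  { intros [i|s]; [apply HU|apply outside_level_open]. }
  { intros z Kz. destruct (classic (exists s, O s z)) as [[s Hs]|H]; [exists (inr s); auto|].
    destruct (Hcov z) as [i Hi]; [|exists (inl i); auto].
    apply in_every_level_tree_set; auto. intro s. apply NNPP; intro H1. apply H. exists s.
    intros j Hj. apply Rnot_le_lt. intro H2. apply H1. exists j; split; auto. }
  exists (flat_map (fun e => match e with inl i => [i] | inr _ => [] end) l).
  intros z Hz. destruct (Hl z (proj1 Hz)) as [[i|s] [H1 H2]].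
  - exists i. split; auto. apply in_flat_map. exists (inl i). simpl; auto.
  - exfalso. destruct Hz as [_ [a [Ha Hin]]]. specialize (H2 (a s) (branch_lt a Ha s)).
    specialize (Hin s). unfold in_ball in Hin. lra.
Qed.

(* The tree set is perfect: flipping a branch at level s+1 gives another
   point at distance at most 2/(s+1). *)
Lemma tree_set_perfect : perfect_subset d tree_set.
Proof.
  intros x [Kx [a [Ha Hx]]] e He.
  destruct (inv_succ_lt (e/2)) as [s Hs]; [lra|].
  destruct (branch_flip a s Ha) as [b [Hb [Hb1 Hb2]]].
  destruct (branch_point b Hb) as [y [Ky Hy]].
  exists y. split; [split; eauto|split].
  - intro E. subst y. apply Hb2.
    apply (level_unique (S s) _ _ x); [apply branch_lt; auto|apply branch_lt; auto|apply Hy|apply Hx].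
  - specialize (Hy s). specialize (Hx s). rewrite Hb1 in Hy by lia. unfold in_ball in Hx, Hy.
    pose proof (level_radius s (a s) (branch_lt a Ha s)).
    pose proof (dist_tri d Hd x (fst (T s (a s))) y). rewrite (dist_sym d Hd x (fst (T s (a s)))) in H0. lra.
Qed.

Lemma level_ball_isolated m j0 : (j0 < 2 ^ m)%nat ->
  exists del, 0 < del /\ forall j, (j < 2 ^ m)%nat -> j <> j0 -> forall w, in_ball d (T m j) w ->
    snd (T m j0) + del < d (fst (T m j0)) w.
Proof.
  intros Hj0.
  destruct (nat_common_radius (2 ^ m) (fun j e => j <> j0 -> forall w, in_ball d (T m j) w ->
      snd (T m j0) + e < d (fst (T m j0)) w)) as [del [Hdel Hdel2]].
  { intros j e e' H1 H2 Hj w Hw. specialize (H1 Hj w Hw). lra. }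
  { intros j Hj. destruct (Nat.eq_dec j j0) as [E|E]; [exists 1; split; [lra|intro; contradiction]|].
    pose proof (level_apart m j0 j Hj0 Hj (not_eq_sym E)) as Hdj. unfold balls_apart in Hdj.
    exists ((d (fst (T m j0)) (fst (T m j)) - snd (T m j0) - snd (T m j)) / 2). split; [lra|].
    intros _ w Hw. unfold in_ball in Hw. pose proof (dist_tri d Hd (fst (T m j0)) w (fst (T m j))).
    rewrite (dist_sym d Hd w) in H. lra. }
  exists del. split; auto.
Qed.

(* The tree set is totally disconnected: two points on branches separating at
   level m are split by a slightly enlarged level-m ball and its exterior. *)
Lemma tree_set_totally_disconnected : totally_disconnected_subset d tree_set.
Proof.
  intros C HC Hconn x y Hx Hy. apply NNPP; intro Hxy.
  destruct (HC x Hx) as [_ [a [Ha Hxa]]]. destruct (HC y Hy) as [_ [b [Hb Hyb]]].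
  destruct (branches_diverge a b x y Ha Hb Hxa Hyb Hxy) as [m Hm].
  destruct (level_ball_isolated m (a m) (branch_lt a Ha m)) as [del [Hdel Hiso]].
  apply Hconn. exists (fun w => d (fst (T m (a m))) w < snd (T m (a m)) + del),
    (fun w => snd (T m (a m)) + del < d (fst (T m (a m))) w).
  split; [apply open_ball; auto|]. split; [apply open_ball_exterior; auto|].
  split; [|split; [|split]].
  - intros w Hw. destruct (HC w Hw) as [_ [c [Hc Hwc]]]. destruct (Nat.eq_dec (c m) (a m)) as [E|E].
    + left. specialize (Hwc m). rewrite E in Hwc. unfold in_ball in Hwc. lra.
    + right. apply (Hiso (c m)); auto. apply branch_lt; auto.
  - exists x. split; auto. specialize (Hxa m). unfold in_ball in Hxa. lra.
  - exists y. split; auto. apply (Hiso (b m)); auto. apply branch_lt; auto.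
  - intros w _ H1 H2. lra.
Qed.

End TreeSet.

Lemma cantor_in_compact {Y} (d : Y -> Y -> R) (Hd : is_metric d) (K : Y -> Prop)
  (HK : compact_subset d K) (Hp : perfect_subset d K) (Hne : exists y, K y)
  (g : Y -> Y) (Hg : continuous_map d d g) (t : nat) (Hbound : asy_bounded_on (fun y => y) d g K t) :
  exists C : Y -> Prop, (forall y, C y -> K y) /\ cantor_subset d C /\
    forall x y, C x -> C y -> x <> y -> ~ Asy d g x y.
Proof.
  destruct Hne as [y0 Ky0].
  destruct (dependent_choice (fun s L => level_ok d K g s (fst L) (snd L))
    (fun s L L' => level_refines d K s (fst L) (snd L) (fst L') (snd L'))
    (fun _ => (y0, 1), fun _ _ => 0%nat)) as [F [_ HF]].
  { split; simpl.
    - intros j _. rewrite Rinv_1. split; [split; simpl; auto|]; lra.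
    - intros i j Hi Hj Hij. lia. }
  { intros s [T Kf] HT. destruct (level_step d Hd K g HK Hp Hg t Hbound s T Kf HT) as [T' [Kf' H]].
    exists (T', Kf'). exact H. }
  set (T := fun s => fst (F s)). set (Kf := fun s => snd (F s)).
  assert (Hlev : forall s, level_ok d K g s (T s) (Kf s)) by (intro s; apply HF).
  assert (Href : forall s, level_refines d K s (T s) (Kf s) (T (S s)) (Kf (S s))) by (intro s; apply HF).
  exists (tree_set d K T). split; [intros y [Ky _]; auto|]. split; [split; [|split; [|split]]|].
  - exact (tree_set_nonempty d Hd K g T Kf Hlev Href HK).
  - exact (tree_set_compact d Hd K g T Kf Hlev Href HK).
  - exact (tree_set_perfect d Hd K g T Kf Hlev Href HK).
  - exact (tree_set_totally_disconnected d Hd K g T Kf Hlev).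
  - exact (tree_set_not_asy d Hd K g T Kf Hlev Href).
Qed.

Lemma cantor_two_points {Y} (d : Y -> Y -> R) (C : Y -> Prop) :
  cantor_subset d C -> exists x y, C x /\ C y /\ x <> y.
Proof.
  intros [[x Hx] [_ [Hper _]]]. destruct (Hper x Hx 1 ltac:(lra)) as [y [Hy [Hyx _]]].
  exists x, y. auto.
Qed.

(* Under a factor map with fibres of at most t points, the image of a perfect
   set is perfect: a neighbourhood of x in S contains t+1 points, whose images
   cannot all equal p x. *)
Lemma image_perfect {X Y} (dX : X -> X -> R) (dY : Y -> Y -> R) (HdX : is_metric dX)
  (p : X -> Y) (t : nat) (Hpc : continuous_map dX dY p) (Hfib : fibers_bounded p t) (Sc : X -> Prop) :
  perfect_subset dX Sc -> perfect_subset dY (image p Sc).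
Proof.
  intros Hper y [x [Hx <-]] e He. apply NNPP; intro Hn.
  destruct (Hpc x e He) as [del [Hdel Hd]].
  assert (H : forall m, exists l rho, NoDup l /\ length l = m /\ 0 < rho /\
     (forall z, In z l -> Sc z /\ dX x z < del /\ rho <= dX x z)).
  { induction m as [|m IH].
    { exists [], del. split; [constructor|]. split; [reflexivity|]. split; [exact Hdel|intros z []]. }
    destruct IH as [l [rho [H1 [H2 [H3 H4]]]]].
    destruct (Hper x Hx (Rmin del rho)) as [z [Hz [Hzx Hdz]]]; [apply Rmin_glb_lt; auto|].
    pose proof (Rmin_l del rho). pose proof (Rmin_r del rho).
    pose proof (dist_pos dX HdX x z (fun E => Hzx (eq_sym E))).
    exists (z :: l), (dX x z). split; [|split; [|split]].
    - constructor; auto. intro Hin. specialize (H4 z Hin). lra.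
    - simpl; auto.
    - auto.
    - intros w [<-|Hw]; [split; auto; split; lra|].
      specialize (H4 w Hw). split; [apply H4|]. split; [apply H4|]. lra. }
  destruct (H (S t)) as [l [rho [Hnd [Hl [_ Hz]]]]].
  enough (length l <= t)%nat by lia. apply (Hfib (p x) l Hnd).
  intros z Hzl. destruct (Hz z Hzl) as [Sz [Hdz _]]. apply NNPP; intro Hne. apply Hn.
  exists (p z). split; [exists z; auto|]. split; auto.
Qed.

Lemma list_preimages {X Y} (p : X -> Y) (Sc : X -> Prop) (l : list Y) :
  (forall y, In y l -> image p Sc y) -> exists l', map p l' = l /\ forall x, In x l' -> Sc x.
Proof.
  induction l as [|y l IH]; intros Hl; [exists []; split; [reflexivity|intros x []]|].
  destruct (Hl y (or_introl eq_refl)) as [x [Hx <-]].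
  destruct IH as [l' [E Hl']]; [intros z Hz; apply Hl; right; auto|].
  exists (x :: l'). split; [simpl; rewrite E; reflexivity|]. intros z [<-|Hz]; auto.
Qed.

Lemma asy_bounded_image {X Y} (p : X -> Y) (dY : Y -> Y -> R) (g : Y -> Y) (Sc : X -> Prop) (t : nat) :
  asy_bounded_on p dY g Sc t -> asy_bounded_on (fun y => y) dY g (image p Sc) t.
Proof.
  intros Hb l Hn HK HA. destruct (list_preimages p Sc l HK) as [l' [<- Hl']].
  rewrite length_map. apply Hb; auto.
  - apply (NoDup_map_inv p); auto.
  - intros x y Hx Hy. apply HA; apply in_map; auto.
Qed.

Theorem proposition3p17
  (X Y : Type) (dX : X -> X -> R) (dY : Y -> Y -> R)
  (HdX : is_metric dX) (HdY : is_metric dY)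
  (HcX : compact_space dX) (HcY : compact_space dY)
  (f : X -> X) (g : Y -> Y)
  (Hf : continuous_map dX dX f) (Hg : continuous_map dY dY g)
  (t : nat) (p : X -> Y)
  (Hp : factor_map dX dY f g p)
  (Hfib : fibers_bounded p t)
  (Sc : X -> Prop)
  (HSunc : uncountable_subset Sc)
  (HSscr : synd_scrambled dX f Sc)
  (HSsep : forall l : list X, NoDup l -> length l = (t + 1)%nat ->
      (forall x, In x l -> Sc x) ->
      exists eps, 0 < eps /\ exists M : nat -> Prop, infinite_nat_set M /\
        forall n, M n -> forall x y, In x l -> In y l -> x <> y ->
          eps <= dX (Nat.iter n f x) (Nat.iter n f y)) :
  (exists S' : Y -> Prop, (forall y, S' y -> image p Sc y) /\
     uncountable_subset S' /\ synd_scrambled dY g S') /\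
  (cantor_subset dX Sc ->
   exists S' : Y -> Prop, (forall y, S' y -> image p Sc y) /\
     cantor_subset dY S' /\ synd_scrambled dY g S').
Proof.
  destruct Hp as [Hpc [_ Hcomm]].
  pose proof (separated_tuples_bound dX dY HdX HdY f g p Hpc Hcomm HcX t Hfib Sc HSsep) as Hbound.
  split; [exact (uncountable_scrambled_factor dX dY HdX HdY HcX f g p t Hpc Hcomm Sc HSunc HSscr Hbound)|].
  intros [[x0 Hx0] [Hcomp [Hper _]]].
  destruct (cantor_in_compact dY HdY (image p Sc) (image_compact dX dY p Sc Hpc Hcomp)
    (image_perfect dX dY HdX p t Hpc Hfib Sc Hper) (ex_intro _ (p x0) (ex_intro _ x0 (conj Hx0 eq_refl)))
    g Hg t (asy_bounded_image p dY g Sc t Hbound)) as [C [HCK [HC HCasy]]].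
  exists C. split; [exact HCK|]. split; [exact HC|]. split; [exact (cantor_two_points dY C HC)|].
  intros y1 y2 Hy1 Hy2 Hne. split; [|apply HCasy; auto].
  destruct (HCK y1 Hy1) as [x1 [Hx1 <-]]. destruct (HCK y2 Hy2) as [x2 [Hx2 <-]].
  apply (sprox_factor dX dY HdX HdY HcX f g p Hpc Hcomm). apply HSscr; auto.
  intro E; subst; auto.
Qed.
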